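(* There exist infinitely many connected graphs $G$, with list-assignments $L$ in which $|L(w)|=\deg(w)$ for one vertex $w$ and $|L(v)|\ge\deg(v)+1$ for all other vertices $v$, such that the number of non-singleton connected components of $\mathcal{C}(G,L)$ is exponential in $|V(G)|$ (i.e. at least $c^{|V(G)|}$ for some constant $c>1$).
   Context: A list-assignment $L$ assigns to each vertex $v$ a finite set $L(v)\subseteq\mathbb{N}$; an $L$-colouring is a proper colouring $\varphi$ with $\varphi(v)\in L(v)$ for all $v$. $\mathcal{C}(G,L)$ is the graph whose vertices are the $L$-colourings of $G$, two being adjacent if one is obtained from the other by changing the colour of a single vertex (to another colour in its list, the result being proper). *)

From Stdlib Require Import Reals Relations.
From mathcomp Require Import all_boot.
Set Implicit Arguments. Unset Strict Implicit. Unset Printing Implicit Defensive.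

Definition simple_graph (T : finType) (e : rel T) : Prop :=
  symmetric e /\ irreflexive e.

Definition connected_graph (T : finType) (e : rel T) : Prop :=
  forall x y : T, connect e x y.

Definition deg (T : finType) (e : rel T) (v : T) : nat := #|[set u | e v u]|.

(* A list-assignment L : T -> seq nat; |L(v)| is the number of distinct colours. *)
Definition lsize (s : seq nat) : nat := size (undup s).

Definition Lcolouring (T : finType) (e : rel T) (L : T -> seq nat)
  (phi : {ffun T -> nat}) : Prop :=
  (forall v, phi v \in L v) /\ (forall u v, e u v -> phi u <> phi v).

Definition recol_adj (T : finType) (e : rel T) (L : T -> seq nat)
  (phi psi : {ffun T -> nat}) : Prop :=
  Lcolouring e L phi /\ Lcolouring e L psi /\
  exists v, phi v <> psi v /\ (forall u, u <> v -> phi u = psi u).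

Definition recol_conn (T : finType) (e : rel T) (L : T -> seq nat) :
  relation {ffun T -> nat} := clos_refl_trans _ (recol_adj e L).

Definition at_least_nonsingleton_components (T : finType) (e : rel T)
  (L : T -> seq nat) (N : nat) : Prop :=
  exists reps : 'I_N -> {ffun T -> nat},
    (forall i, Lcolouring e L (reps i)) /\
    (forall i, exists psi, recol_adj e L (reps i) psi) /\
    (forall i j, i <> j -> ~ recol_conn e L (reps i) (reps j)).

From Stdlib Require Import Reals.
From mathcomp Require Import all_boot fingroup perm.
Set Implicit Arguments. Unset Strict Implicit. Unset Printing Implicit Defensive.

(* Take the complete graph on t vertices with one pendant vertex attached to a
   clique vertex w; every clique vertex gets the list {0, ..., t-1} and the
   pendant vertex the list {t, t+1}.  A proper colouring must use all t colours
   on the clique, so no clique vertex can ever be recoloured: each of the t!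
   bijections from the clique onto the colours spans its own component of
   C(G,L), and that component is not a singleton because the pendant vertex can
   always switch colour.  As |V(G)| = t + 1 and t! >= 2^(t+1) for t >= 6, the
   number of components is exponential. *)

Section FrozenClique.
Variables (T : finType) (e : rel T) (L : T -> seq nat) (K : {set T}).
Hypothesis K_clique : {in K &, forall u v, u != v -> e u v}.
Hypothesis K_lists : {in K, forall v c, c \in L v -> c < #|K|}.

Lemma colouring_onto_clique (p : {ffun T -> nat}) :
  Lcolouring e L p -> forall c, c < #|K| -> exists2 u, u \in K & p u = c.
Proof.
move=> [p_in p_proper] c ltcK.
have p_injK : {in enum K &, injective p}.
  move=> u v; rewrite !mem_enum => uK vK puv; apply/eqP; apply/negPn/negP.
  by move=> /(K_clique uK vK) /p_proper.
have sub_iota : {subset [seq p u | u in K] <= iota 0 #|K|}.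
  by move=> _ /imageP[u uK ->]; rewrite mem_iota add0n (K_lists uK (p_in u)).
have uniq_img : uniq [seq p u | u in K] by rewrite (map_inj_in_uniq p_injK) enum_uniq.
have size_img : size (iota 0 #|K|) <= size [seq p u | u in K].
  by rewrite size_iota size_image.
have [_ same] := uniq_min_size uniq_img sub_iota size_img.
have := mem_iota 0 #|K| c; rewrite add0n ltcK -same.
by case/imageP=> u uK ->; exists u.
Qed.

Lemma recol_adj_eq_on_clique p q : recol_adj e L p q -> {in K, p =1 q}.
Proof.
move=> [p_col [[q_in q_proper] [v [pqv pq_off]]]] x xK.
move: xK; case: (eqVneq x v) => [-> vK | xv _]; last exact: pq_off (elimN eqP xv).
(* The new colour [q v] is already taken by [p] at some clique vertex [u], which keeps it. *)
have [u uK puq] := colouring_onto_clique p_col (K_lists vK (q_in v)).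
have uv : u != v by apply/eqP => uv; apply: pqv; rewrite -puq uv.
exfalso; apply: (q_proper u v (K_clique uK vK uv)).
by rewrite -(pq_off u (elimN eqP uv)).
Qed.

Lemma recol_conn_eq_on_clique p q : recol_conn e L p q -> {in K, p =1 q}.
Proof.
elim=> [x y /recol_adj_eq_on_clique // | // | x y z _ exy _ eyz u uK].
by rewrite exy ?eyz.
Qed.

End FrozenClique.

Lemma lsize_iota m n : lsize (iota m n) = n.
Proof. by rewrite /lsize undup_id ?iota_uniq // size_iota. Qed.

Lemma card_option_set (T : finType) (A : {set option T}) :
  #|A| = (None \in A) + #|[set x | Some x \in A]|.
Proof.
rewrite (cardsD1 None); congr (_ + _).
rewrite -[RHS](card_imset _ (@Some_inj _)); apply: eq_card => -[x|]; rewrite !inE /=.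
- by apply/idP/imsetP=> [xA | [y yA [->]]]; [exists x; rewrite ?inE | rewrite inE in yA].
- by apply/esym/imsetP=> -[].
Qed.

Section Lollipop.
Variable k : nat.
Local Notation t := k.+1.
Local Notation V := (option 'I_t).

Definition lollipop (u v : V) : bool :=
  match u, v with
  | Some i, Some j => i != j
  | None, Some j | Some j, None => j == ord0
  | None, None => false
  end.

Definition lollipop_lists (u : V) : seq nat :=
  if u is Some _ then iota 0 t else [:: t; t.+1].

Definition lollipop_colouring (s : {perm 'I_t}) (c : nat) : {ffun V -> nat} :=
  [ffun u => if u is Some i then val (s i) else c].

Lemma lollipop_simple : simple_graph lollipop.
Proof.
split; first by case=> [i|] [j|] //=; rewrite eq_sym.
by case=> [i|] //=; rewrite eqxx.
Qed.

Lemma lollipop_connected : connected_graph lollipop.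
Proof.
have to_root x : connect lollipop x (Some ord0).
  case: x => [i|]; last exact: connect1.
  by case: (eqVneq i ord0) => [->|ne]; [exact: connect0 | exact: connect1].
have sym : connect_sym lollipop by apply: sym_connect_sym; case: lollipop_simple.
by move=> x y; apply: connect_trans (to_root x) _; rewrite sym.
Qed.

Lemma deg_lollipop_clique i : deg lollipop (Some i) = k + (i == ord0).
Proof.
rewrite /deg card_option_set inE /= addnC; congr (_ + _).
have -> : [set j | Some j \in [set u | lollipop (Some i) u]] = [set~ i].
  by apply/setP=> j; rewrite !inE eq_sym.
by rewrite cardsC1 card_ord.
Qed.

Lemma deg_lollipop_pendant : deg lollipop None = 1.
Proof.
rewrite /deg card_option_set inE /=.
have -> : [set j | Some j \in [set u | lollipop None u]] = [set ord0].
  by apply/setP=> j; rewrite !inE.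
by rewrite cards1.
Qed.

Lemma lsize_lollipop_root :
  lsize (lollipop_lists (Some ord0)) = deg lollipop (Some ord0).
Proof. by rewrite lsize_iota deg_lollipop_clique eqxx addn1. Qed.

Lemma lsize_lollipop_other v :
  v != Some ord0 -> deg lollipop v + 1 <= lsize (lollipop_lists v).
Proof.
case: v => [i ne|_]; last by rewrite deg_lollipop_pendant /lsize /= inE (ltn_eqF (ltnSn t)).
have /negbTE i_nonroot : i != ord0 by apply: contraNneq ne => ->.
by rewrite deg_lollipop_clique i_nonroot lsize_iota addn0 addn1.
Qed.

Lemma lollipop_colouringP s c :
  c \in [:: t; t.+1] -> Lcolouring lollipop lollipop_lists (lollipop_colouring s c).
Proof.
move=> c_pendant; have c_big : t <= c by move: c_pendant; rewrite !inE => /orP[]/eqP->.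
split=> [[i|] | [i|] [j|]]; rewrite !ffunE //.
- by rewrite mem_iota ltn_ord.
- by move=> /negP ij /val_inj/perm_inj/eqP.
- by move=> _ si_c; move: (ltn_ord (s i)); rewrite si_c ltnNge c_big.
- by move=> _ c_sj; move: (ltn_ord (s j)); rewrite -c_sj ltnNge c_big.
Qed.

Definition lollipop_clique : {set V} := [set~ None].

Lemma card_lollipop_clique : #|lollipop_clique| = t.
Proof. by rewrite cardsC1 card_option card_ord. Qed.

Lemma lollipop_clique_complete :
  {in lollipop_clique &, forall u v, u != v -> lollipop u v}.
Proof. by move=> [i|] [j|]; rewrite !inE. Qed.

Lemma lollipop_clique_lists :
  {in lollipop_clique, forall v c, c \in lollipop_lists v -> c < #|lollipop_clique|}.
Proof.
move=> [i _ c|]; last by rewrite !inE.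
by rewrite card_lollipop_clique mem_iota.
Qed.

Lemma recol_conn_lollipop_perm s s' c c' :
  recol_conn lollipop lollipop_lists
    (lollipop_colouring s c) (lollipop_colouring s' c') -> s = s'.
Proof.
move=> /(recol_conn_eq_on_clique lollipop_clique_complete lollipop_clique_lists) same.
apply/permP=> i; apply: val_inj.
by have := same (Some i); rewrite !ffunE; apply; rewrite !inE.
Qed.

End Lollipop.

Lemma expn2S_le_fact m : 6 <= m -> 2 ^ m.+1 <= m`!.
Proof.
elim: m => // m IH; rewrite leq_eqVlt => /predU1P[<- // | lt6m].
by rewrite expnS factS leq_mul ?IH // (leq_trans _ lt6m).
Qed.

Lemma INR_expn m n : INR (m ^ n) = pow (INR m) n.
Proof. by elim: n => // n IH; rewrite expnS mult_INR IH. Qed.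

Theorem mainTheorem3 :
  exists c : R, Rlt 1 c /\
  forall n : nat,
    exists (T : finType) (e : rel T) (L : T -> seq nat) (w : T),
      (n <= #|T|)%N /\
      simple_graph e /\ connected_graph e /\
      lsize (L w) = deg e w /\
      (forall v, v != w -> (deg e v + 1 <= lsize (L v))%N) /\
      exists N : nat,
        Rle (pow c #|T|) (INR N) /\ at_least_nonsingleton_components e L N.
Proof.
exists (INR 2); split; first exact: lt_1_INR.
move=> n; set k := n + 5.
have card_V : #|{: option 'I_k.+1}| = k.+2 by rewrite card_option card_ord.
exists (option 'I_k.+1), (@lollipop k), (@lollipop_lists k), (Some ord0).
rewrite card_V; split; first exact: leq_trans (leq_addr 5 n) (leqW (leqnSn k)).
split; first exact: lollipop_simple.
split; first exact: lollipop_connected.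
split; first exact: lsize_lollipop_root.
split; first exact: lsize_lollipop_other.
exists #|{perm 'I_k.+1}|; split.
  rewrite card_Sn -INR_expn; apply/le_INR/leP/expn2S_le_fact.
  by rewrite ltnS leq_addl.
exists (fun i => lollipop_colouring (enum_val i) k.+1).
split; first by move=> i; apply: lollipop_colouringP; rewrite inE eqxx.
split=> [i | i j ij /recol_conn_lollipop_perm/enum_val_inj //].
exists (lollipop_colouring (enum_val i) k.+2); split; [|split].
- by apply: lollipop_colouringP; rewrite inE eqxx.
- by apply: lollipop_colouringP; rewrite !inE eqxx orbT.
- by exists None; split=> [|[u|] //]; rewrite !ffunE // => /n_Sn.
Qed.
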